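(* Let $k_1,k_2$ be integers with $0<k_1\le 10$ and $0<k_2$, and let $f=f_{k_1,k_2}$. Then $g(f)=k_1$, $r(f)=k_2+1$, and consequently $s(f)=\min\left\{\frac{k_2+1}{2},\,k_1+1\right\}$.
   Context: Throughout, $d=10$ and $\mathbb{Z}_{10}$ is the ring of integers mod $10$. For integers $k_1,k_2>0$ define $f_{k_1,k_2}:\mathbb{Z}_{10}^{10+k_1+k_2}\to\mathbb{Z}_{10}$ by $f_{k_1,k_2}(x_0,\dots,x_{9+k_1+k_2}) = x_j + \sum_{i=10+k_1}^{9+k_1+k_2} x_i \bmod 10$, where $j=\left(\sum_{i=10}^{9+k_1}x_i\right)\bmod 10\in\{0,\dots,9\}$. For a function $f:\mathbb{Z}_d^k\to\mathbb{Z}_d$: the Hamming weight $H(\alpha)$ of $\alpha\in\mathbb{Z}_d^k$ is its number of nonzero coordinates. Fourier basis: $\chi_\alpha(x)=\exp\!\left(-2\pi\sqrt{-1}\,(x\cdot\alpha)/d\right)$ for $\alpha,x\in\mathbb{Z}_d^k$; every $Q:\mathbb{Z}_d^k\to\mathbb{R}$ has a unique expansion $Q=\sum_{\alpha}\hat Q_\alpha\chi_\alpha$. For $j\in\mathbb{Z}_d$ let $Q^{f,j}:\mathbb{Z}_d^k\to\{\pm1\}$, $Q^{f,j}(x)=1$ if $f(x)=j$ and $-1$ otherwise. The distributional complexity of $Q$ is $r(Q)=\min\{H(\alpha): \alpha\neq\vec 0,\ \hat Q_\alpha\neq 0\}$, and $r(f)=\min_{j\in\mathbb{Z}_d} r(Q^{f,j})$.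 Further, $g(f)$ is the least integer $\ell\ge 0$ such that there exist a set $S\subseteq[k]$ of $|S|=\ell$ coordinates, values $\alpha\in\mathbb{Z}_d^{\ell}$ and a modulus $\hat d$ with $2\le\hat d\le d$ such that the restriction $f_{|S,\alpha}:\mathbb{Z}_d^{k-\ell}\to\mathbb{Z}_d$ (fix the coordinates in $S$ to $\alpha$) is a linear function mod $\hat d$, i.e. there are integers $a_i,b$ with $f_{|S,\alpha}(y)\equiv b+\sum_i a_iy_i \pmod{\hat d}$ for all $y$ (elements of $\mathbb{Z}_d$ identified with $\{0,\dots,d-1\}$). Finally $s(f)=\min\{r(f)/2,\,g(f)+1\}$. *)

From HB Require Import structures.
From mathcomp Require Import all_boot all_order all_algebra all_field.
From Stdlib Require Import ClassicalEpsilon.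
Set Implicit Arguments. Unset Strict Implicit. Unset Printing Implicit Defensive.
Import Order.TTheory GRing.Theory Num.Theory Num.Def.
Local Open Scope ring_scope.

(* d = 10; Z_10 is represented by 'I_10 (values 0..9). *)
Definition vec (k : nat) := {ffun 'I_k -> 'I_10}.

Definition asbool (P : Prop) : bool :=
  if excluded_middle_informative P then true else false.

Definition modZ10 (n : nat) : 'I_10 := Ordinal (ltn_pmod n (erefl true : (0 < 10)%N)).

(* x_i as a natural number (0 if i is out of range; never used out of range) *)
Definition xat k (x : vec k) (i : nat) : nat :=
  match @insub nat (fun m => m < k)%N _ i with Some o => val (x o) | None => 0%N end.

Definition fk (k1 k2 : nat) (x : vec (10 + k1 + k2)) : 'I_10 :=
  let j := ((\sum_(10 <= i < 10 + k1) xat x i) %% 10)%N in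
  modZ10 (xat x j + \sum_(10 + k1 <= i < 10 + k1 + k2) xat x i)%N.

Definition H k (a : vec k) : nat := #|[set i | val (a i) != 0%N]|.

Definition zerovec k : vec k := [ffun _ => ord0].

(* omega = exp(-2 pi sqrt(-1) / 10): 5.-root (-1) is exp(i pi/5) (minimal
   nonnegative argument), and we take its complex conjugate. *)
Definition omega : algC := (5.-root (-1))^*.

Definition dot k (x a : vec k) : nat := (\sum_i val (x i) * val (a i))%N.

Definition chi k (a x : vec k) : algC := omega ^+ (dot x a).

(* Fourier coefficient: the unique hat Q_a with Q = sum_a hat Q_a chi_a *)
Definition fourier k (Q : vec k -> algC) (a : vec k) : algC :=
  (10 ^ k)%:R^-1 * \sum_(x : vec k) Q x * (chi a x)^*.

Definition Qfj k (f : vec k -> 'I_10) (j : 'I_10) : vec k -> algC :=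
  fun x => if f x == j then 1 else -1.

(* distributional complexity r(Q); convention: k+1 ("infinity") if Q has no
   nonzero Fourier coefficient at a nonzero frequency *)
Definition rQ k (Q : vec k -> algC) : nat :=
  \big[minn/k.+1]_(a : vec k | (a != zerovec k) && (fourier Q a != 0)) H a.

Definition r k (f : vec k -> 'I_10) : nat :=
  \big[minn/k.+1]_(j < 10) rQ (Qfj f j).

(* the restriction f_{|S,alpha} (alpha given on S; values off S ignored)
   is linear mod dh *)
Definition restr_linear k (f : vec k -> 'I_10) (S : {set 'I_k}) (alpha : vec k)
    (dh : nat) : Prop :=
  exists (a : 'I_k -> int) (b : int),
    forall x : vec k, (forall i, i \in S -> x i = alpha i) ->
      ((val (f x))%:Z = b + \sum_(i | i \notin S) a i * (val (x i))%:Z %[mod dh%:Z])%Z.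

Definition Pg k (f : vec k -> 'I_10) (l : nat) : Prop :=
  exists (S : {set 'I_k}) (alpha : vec k) (dh : nat),
    #|S| = l /\ (2 <= dh <= 10)%N /\ restr_linear f S alpha dh.

(* g(f): least l with Pg f l (l = k always works, so the default k is harmless) *)
Definition g k (f : vec k -> 'I_10) : nat :=
  \big[minn/k]_(l < k.+1 | asbool (Pg f l)) l.

Definition s k (f : vec k -> 'I_10) : rat :=
  Order.min ((r f)%:R / 2 : rat) ((g f).+1)%:R.

From HB Require Import structures.
From mathcomp Require Import all_boot all_order all_algebra all_field.
From mathcomp Require Import ring zify.
From Stdlib Require Import ClassicalEpsilon.
Import Order.TTheory GRing.Theory Num.Theory.
Set Implicit Arguments. Unset Strict Implicit. Unset Printing Implicit Defensive.
Local Open Scope ring_scope.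

(* Write f(x) = x_j + T(x), where j is the sum of the k1 selector coordinates
   x_10, ..., x_{9+k1} and T the sum of the k2 tail coordinates.

   r(f) >= k2 + 1: let 0 < H(a) <= k2.  Either a vanishes at some tail
   coordinate x_i, and translating x_i by t translates f by t and leaves chi_a
   unchanged, or a is nonzero on the whole tail, hence zero on the data
   x_0, ..., x_9, and translating all the data does the same.  Averaging over t
   kills the Fourier coefficient of every Q^{f,j} at a.  Conversely f agrees
   with the linear form x_0 + T wherever j = 0, which makes the coefficient of
   Q^{f,0} at the frequency of x_0 + T, of weight k2 + 1, nonzero.

   g(f) = k1: fixing the selector to 0 leaves x_0 + T.  If fewer than k1
   coordinates are fixed, some selector coordinate x_p and some data coordinate
   x_m stay free; x_p decides whether x_m is read, so f has a nonzero mixed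
   second difference in (x_p, x_m), which no affine map mod d has. *)

Lemma bigminn_inf (I : finType) (P : pred I) (F : I -> nat) d i0 m :
  P i0 -> (F i0 <= m)%N -> (\big[minn/d]_(i | P i) F i <= m)%N.
Proof.
move=> Pi0; apply: leq_trans; have : i0 \in index_enum I by rewrite mem_index_enum.
elim: (index_enum I) => //= j r IHr; rewrite inE big_cons.
case/orP => [/eqP <-|/IHr le_ri0]; first by rewrite Pi0 geq_minl.
by case: (P j); rewrite // geq_min le_ri0 orbT.
Qed.

Lemma le_bigminn (I : finType) (P : pred I) (F : I -> nat) d m :
  (m <= d)%N -> (forall i, P i -> m <= F i)%N ->
  (m <= \big[minn/d]_(i | P i) F i)%N.
Proof.
move=> md mF; elim/big_ind: _ => // x y mx my.
by rewrite leq_min mx my.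
Qed.

Lemma asboolT (P : Prop) : P -> asbool P.
Proof. by rewrite /asbool; case: excluded_middle_informative. Qed.

Lemma asboolP (P : Prop) : asbool P -> P.
Proof. by rewrite /asbool; case: excluded_middle_informative. Qed.

Lemma exists_notin (T : finType) (A S : {set T}) :
  (#|S| < #|A|)%N -> exists2 x, x \in A & x \notin S.
Proof.
move=> ltSA; apply/exists_inP; apply: contraLR ltSA => /exists_inPn AS.
by rewrite -leqNgt subset_leq_card //; apply/subsetP => x /AS /negPn.
Qed.

Lemma sum_translate (V : finZmodType) (M : nmodType) (F : V -> M) (u : V) :
  \sum_t F (u + t) = \sum_t F t.
Proof. by rewrite [RHS](reindex_inj (addrI u)). Qed.

Lemma affine_mixed_diff_mod (d b ap am u0 u1 v0 v1 w00 w01 w10 w11 : int) :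
  (w00 = b + (ap * u0 + am * v0) %[mod d])%Z ->
  (w01 = b + (ap * u0 + am * v1) %[mod d])%Z ->
  (w10 = b + (ap * u1 + am * v0) %[mod d])%Z ->
  (w11 = b + (ap * u1 + am * v1) %[mod d])%Z ->
  (w00 - w01 - w10 + w11 = 0 %[mod d])%Z.
Proof.
move=> /eqP h00 /eqP h01 /eqP h10 /eqP h11; apply/eqP.
rewrite eqz_mod_dvd in h00; rewrite eqz_mod_dvd in h01.
rewrite eqz_mod_dvd in h10; rewrite eqz_mod_dvd in h11.
rewrite eqz_mod_dvd subr0.
have -> : w00 - w01 - w10 + w11 =
    (w00 - (b + (ap * u0 + am * v0))) - (w01 - (b + (ap * u0 + am * v1)))
  - (w10 - (b + (ap * u1 + am * v0))) + (w11 - (b + (ap * u1 + am * v1))).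
  by ring.
by rewrite rpredD // rpredB // rpredB.
Qed.

Definition zeta : algC := 5.-root (-1).

Lemma prim_root_zeta : 10.-primitive_root zeta.
Proof.
have zeta5 : zeta ^+ 5 = -1 by rewrite rootCK.
have zeta_neqN1 : zeta != -1.
  by apply/eqP => zN1; have := @rootC_lt0 algC 5 (-1) isT; rewrite -/zeta zN1 ltrN10.
have N1_neq1 : (-1 : algC) != 1 by rewrite lt_eqF // (lt_trans (ltrN10 _) ltr01).
have zeta10 : zeta ^+ 10 = 1 by rewrite (exprM zeta 5 2) zeta5 sqrrN expr1n.
have [m pm m10] := prim_order_exists (isT : (0 < 10)%N) zeta10.
have m5 : ~~ (m %| 5)%N by rewrite (prim_order_dvd pm) zeta5.
have m2 : ~~ (m %| 2)%N.
  rewrite (prim_order_dvd pm) sqrf_eq1 negb_or zeta_neqN1 andbT.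
  by apply: contraNneq N1_neq1 => zeta1; rewrite -zeta5 zeta1 expr1n.
have : m \in divisors 10 by rewrite -dvdn_divisors.
by rewrite !inE => /or4P[] /eqP mE; rewrite mE in m2 m5 pm.
Qed.

Definition ezeta (v : 'I_10) : algC := zeta ^+ v.

Lemma ezeta0 : ezeta 0 = 1.
Proof. exact: expr0. Qed.

Lemma ezetaD u v : ezeta (u + v) = ezeta u * ezeta v.
Proof. by rewrite /ezeta -exprD -[RHS](prim_expr_mod prim_root_zeta). Qed.

Lemma ezeta_eq1 v : (ezeta v == 1) = (v == 0).
Proof.
rewrite /ezeta -(prim_order_dvd prim_root_zeta).
by case: v => [[|v] lt_v] //=; rewrite gtnNdvd.
Qed.

Lemma sum_ezeta : \sum_v ezeta v = 0.
Proof.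
have zeta_neq1 : zeta != 1 by rewrite -[zeta]expr1 -(prim_order_dvd prim_root_zeta).
have := subrX1 zeta 10; rewrite prim_expr_order ?prim_root_zeta // subrr.
by move/esym/eqP; rewrite mulf_eq0 subr_eq0 (negbTE zeta_neq1) => /eqP.
Qed.

Lemma sum_sign_ezeta : \sum_v (if v == 0 then 1 else -1) * ezeta v = 2%:R.
Proof.
rewrite (bigD1 0) //= ezeta0 mul1r (eq_bigr (fun v => - ezeta v)) => [|v /negbTE ->].
  have := sum_ezeta; rewrite (bigD1 0) //= ezeta0 sumrN.
  by move/eqP; rewrite addr_eq0 => /eqP <-.
exact: mulN1r.
Qed.

Definition shift k (P : pred nat) (t : 'I_10) (x : vec k) : vec k :=
  [ffun i => if P (val i) then x i + t else x i].

Lemma shift_inj k P t : injective (@shift k P t).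
Proof.
move=> x y /ffunP xy; apply/ffunP => i; move: (xy i); rewrite !ffunE.
by case: (P _) => // /addIr.
Qed.

Lemma sum_shift_avg k P (G : vec k -> algC) :
  10%:R * \sum_x G x = \sum_x \sum_(t < 10) G (shift P t x).
Proof.
rewrite exchange_big /= [RHS](eq_bigr (fun=> \sum_x G x)) => [|t _].
  by rewrite sumr_const card_ord mulr_natl.
by rewrite [RHS](reindex_inj (@shift_inj k P t)).
Qed.

Definition coordZ k (x : vec k) (i : nat) : 'I_10 := (xat x i)%:R.

Lemma coordZ_ord k (x : vec k) (i : 'I_k) : coordZ x i = x i.
Proof. by rewrite /coordZ /xat valK natr_Zp. Qed.

Lemma coordZ_shift k P t (x : vec k) i : (i < k)%N ->
  coordZ (shift P t x) i = coordZ x i + (if P i then t else 0).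
Proof.
move=> lt_ik; rewrite -[i]/(val (Ordinal lt_ik)) !coordZ_ord ffunE /=.
by case: (P i); rewrite ?addr0.
Qed.

Lemma sum_coordZ_shift k P t (x : vec k) m n : (n <= k)%N ->
  \sum_(m <= i < n) coordZ (shift P t x) i =
  \sum_(m <= i < n) coordZ x i + \sum_(m <= i < n | P i) t.
Proof.
move=> le_nk; rewrite [X in _ = _ + X]big_mkcond -big_split /=.
rewrite big_nat_cond [RHS]big_nat_cond; apply: eq_bigr => i /andP[/andP[_ lt_in] _].
by rewrite coordZ_shift // (leq_trans lt_in le_nk).
Qed.

Definition dotZ k (x a : vec k) : 'I_10 := \sum_i x i * a i.

Lemma val_dotZ k (x a : vec k) : val (dotZ x a) = (dot x a %% 10)%N.
Proof.
rewrite -(val_Zp_nat (p := 10)) // /dot natr_sum; congr val.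
by apply: eq_bigr => i _; rewrite natrM !natr_Zp.
Qed.

Lemma conj_chi k (a x : vec k) : (chi a x)^* = ezeta (dotZ x a).
Proof.
rewrite /chi /omega rmorphXn /= conjCK /ezeta val_dotZ.
by rewrite (prim_expr_mod prim_root_zeta).
Qed.

Lemma dotZ_shift k P t (x a : vec k) :
  dotZ (shift P t x) a = dotZ x a + t * \sum_(i | P (val i)) a i.
Proof.
rewrite /dotZ mulr_sumr [X in _ = _ + X]big_mkcond -big_split /=.
by apply: eq_bigr => i _; rewrite ffunE; case: (P _); rewrite ?mulrDl ?mulr0 ?addr0.
Qed.

Lemma sum_ezeta_dotZ k (a : vec k) : a != zerovec k -> \sum_x ezeta (dotZ x a) = 0.
Proof.
move=> a_neq0; have [i ai_neq0] : exists i, a i != 0.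
  apply/existsP; apply: contraR a_neq0 => /existsPn a0.
  by apply/eqP/ffunP => i; rewrite ffunE; apply/eqP; rewrite -[_ == _]negbK a0.
set S := \sum_x _; have : S = S * ezeta (a i).
  rewrite {1}/S (reindex_inj (@shift_inj k (pred1 (val i)) 1)) mulr_suml.
  by apply: eq_bigr => x _; rewrite dotZ_shift mul1r (big_pred1 i) ?ezetaD.
move/eqP; rewrite -subr_eq0 -{1}(mulr1 S) -mulrBr mulf_eq0 subr_eq0 [1 == _]eq_sym.
by rewrite ezeta_eq1 (negbTE ai_neq0) orbF => /eqP.
Qed.

Lemma fourier_shift_avg k (Q : vec k -> algC) (a : vec k) P :
  (10 ^ k.+1)%:R * fourier Q a =
  \sum_x \sum_(t < 10) Q (shift P t x) * ezeta (dotZ (shift P t x) a).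
Proof.
rewrite /fourier expnS natrM -mulrA mulVKf ?pnatr_eq0 ?expn_eq0 // (sum_shift_avg P).
by apply: eq_bigr => x _; apply: eq_bigr => t _; rewrite conj_chi.
Qed.

Lemma fourier_comp_eq0 k (f : vec k -> 'I_10) (q : 'I_10 -> algC) P (a : vec k) :
  (forall x t, f (shift P t x) = f x + t) -> (forall i : 'I_k, P (val i) -> a i = 0) ->
  a != zerovec k -> fourier (q \o f) a = 0.
Proof.
move=> f_shift a_P a_neq0; apply/eqP.
rewrite -(mulrI_eq0 _ (mulfI (_ : (10 ^ k.+1)%:R != 0))) ?pnatr_eq0 ?expn_eq0 //.
rewrite (fourier_shift_avg _ _ P).
have sum_aP : \sum_(i | P (val i)) a i = 0 by rewrite big1.
under eq_bigr => x _.
  under eq_bigr => t _ do rewrite /= f_shift dotZ_shift sum_aP mulr0 addr0.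
  rewrite -mulr_suml (sum_translate q).
  over.
by rewrite -mulr_sumr sum_ezeta_dotZ ?mulr0.
Qed.

Lemma modZ10E n : modZ10 n = n%:R.
Proof. by apply: val_inj; rewrite /= (val_Zp_nat (p := 10)). Qed.

Section SelectorFunction.
Variables k1 k2 : nat.
Local Notation K := (10 + k1 + k2)%N.
Local Notation f := (@fk k1 k2).

Definition data : {set 'I_K} := [set lshift k2 (lshift k1 i) | i : 'I_10].
Definition selector : {set 'I_K} := [set lshift k2 (rshift 10 i) | i : 'I_k1].
Definition tail : {set 'I_K} := [set rshift (10 + k1) i | i : 'I_k2].

Lemma mem_data i : (i \in data) = (i < 10)%N.
Proof.
apply/imsetP/idP => [[j _ ->] | lt_i10]; first exact: (ltn_ord j).
by exists (Ordinal lt_i10); last apply: val_inj.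
Qed.

Lemma mem_selector i : (i \in selector) = (10 <= i < 10 + k1)%N.
Proof.
apply/imsetP/idP => [[j _ ->] | /andP[ge_i10 lt_i]]; first by rewrite /= ltn_add2l ltn_ord.
have lt_j : (i - 10 < k1)%N by rewrite ltn_subLR.
by exists (Ordinal lt_j); last by apply: val_inj; rewrite /= subnKC.
Qed.

Lemma mem_tail i : (i \in tail) = (10 + k1 <= i)%N.
Proof.
apply/imsetP/idP => [[j _ ->] | ge_i]; first exact: leq_addr.
have lt_j : (i - (10 + k1) < k2)%N by rewrite ltn_subLR.
by exists (Ordinal lt_j); last by apply: val_inj; rewrite /= subnKC.
Qed.

Lemma card_data : #|data| = 10.
Proof. by rewrite card_imset ?card_ord // => i j /lshift_inj /lshift_inj. Qed.

Lemma card_selector : #|selector| = k1.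
Proof. by rewrite card_imset ?card_ord // => i j /lshift_inj /rshift_inj. Qed.

Lemma card_tail : #|tail| = k2.
Proof. by rewrite card_imset ?card_ord //; apply: rshift_inj. Qed.

Definition sel (x : vec K) : nat := val (\sum_(10 <= i < 10 + k1) coordZ x i).

Lemma fkE x : f x = coordZ x (sel x) + \sum_(10 + k1 <= i < K) coordZ x i.
Proof.
rewrite /fk /sel modZ10E natrD natr_sum /coordZ; congr (_ + _).
by congr ((xat x _)%:R); rewrite -natr_sum -modZ10E.
Qed.

Lemma sel_shift P t x : (forall i, 10 <= i < 10 + k1 -> ~~ P i)%N ->
  sel (shift P t x) = sel x.
Proof.
move=> P_sel; rewrite /sel sum_coordZ_shift ?leq_addr //.
suff -> : \sum_(10 <= i < 10 + k1 | P i) t = 0 :> 'I_10 by rewrite addr0.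
by rewrite big_nat_cond big1 // => i /andP[/P_sel /negbTE ->].
Qed.

Lemma fk_shift P t x : (forall i, 10 <= i < 10 + k1 -> ~~ P i)%N ->
  f (shift P t x) =
  f x + (if P (sel x) then t else 0) + \sum_(10 + k1 <= i < K | P i) t.
Proof.
move=> P_sel; rewrite !fkE sel_shift // sum_coordZ_shift // coordZ_shift; last first.
  by rewrite (leq_trans (ltn_ord _)) // -addnA leq_addr.
by rewrite -!addrA; congr (_ + _); rewrite addrCA.
Qed.

Lemma fk_shift_tail (i0 : 'I_K) t x : i0 \in tail ->
  f (shift (pred1 (val i0)) t x) = f x + t.
Proof.
rewrite mem_tail => ge_i0; rewrite fk_shift => [|i /andP[_ lt_i]]; last first.
  by rewrite /= neq_ltn (leq_trans lt_i ge_i0).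
rewrite big_nat1_eq ge_i0 ltn_ord /= ifF ?addr0 //.
by apply/negbTE; rewrite neq_ltn (leq_trans (ltn_ord _) (leq_trans (leq_addr k1 10) ge_i0)).
Qed.

Lemma fk_shift_data t x : f (shift (fun i => i < 10)%N t x) = f x + t.
Proof.
rewrite fk_shift => [|i /andP[ge_i10 _]]; last by rewrite -leqNgt.
rewrite ltn_ord big_nat_cond big1 ?addr0 // => i /andP[/andP[ge_i _] lt_i10].
by move: (leq_trans lt_i10 (leq_trans (leq_addr k1 10) ge_i)); rewrite ltnn.
Qed.

Lemma fk_shift0 t x :
  f (shift (pred1 0%N) t x) = f x + (if sel x == 0%N then t else 0).
Proof.
rewrite fk_shift => [|i /andP[ge_i10 _]]; last first.
  by rewrite /= gtn_eqF // (leq_trans _ ge_i10).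
by rewrite big_nat1_eq /= addr0.
Qed.

Lemma tail_lt_H (a : vec K) (j : 'I_K) :
  {in tail, forall i, a i != 0} -> a j != 0 -> j \notin tail -> (k2 < H a)%N.
Proof.
move=> a_tail aj_neq0 j_tail.
have : j |: tail \subset [set i | val (a i) != 0%N].
  apply/subsetP => i; rewrite !inE => /orP[/eqP -> // | /a_tail]; exact.
by move/subset_leq_card; rewrite cardsU1 j_tail card_tail.
Qed.

Lemma fourier_fk_eq0 (j : 'I_10) (a : vec K) :
  a != zerovec K -> (H a <= k2)%N -> fourier (Qfj f j) a = 0.
Proof.
move=> a_neq0 Ha; pose q v : algC := if v == j then 1 else -1.
case: (boolP [exists i in tail, a i == 0]) => [|/exists_inPn a_tail].
  case/exists_inP => i i_tail /eqP ai0.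
  apply: (fourier_comp_eq0 q (P := pred1 (val i))) => // [x t | i' /eqP/val_inj -> //].
  exact: fk_shift_tail.
apply: (fourier_comp_eq0 q (P := fun i : nat => (i < 10)%N)) => // [x t | i lt_i10].
  exact: fk_shift_data.
apply/eqP; apply: contraTT Ha => ai_neq0; rewrite -ltnNge.
apply: (tail_lt_H a_tail ai_neq0); rewrite mem_tail -ltnNge.
by rewrite (leq_trans lt_i10) // -addnA leq_addr.
Qed.

Definition freq : vec K :=
  [ffun i : 'I_K => if (val i == 0%N) || (10 + k1 <= i)%N then 1 else 0].

Lemma freq_neq0 : freq != zerovec K.
Proof. by apply/eqP => /ffunP /(_ ord0); rewrite !ffunE => /(congr1 val). Qed.

Lemma H_freq : (H freq <= k2.+1)%N.
Proof.
have : [set i | val (freq i) != 0%N] \subset ord0 |: tail.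
  by apply/subsetP => i; rewrite !inE ffunE mem_tail; case: ifP.
move/subset_leq_card/leq_trans; apply.
by rewrite cardsU1 card_tail; case: (_ \notin _).
Qed.

Lemma dotZ_freq x : sel x = 0%N -> dotZ x freq = f x.
Proof.
move=> sel0; rewrite fkE sel0 /dotZ.
rewrite (eq_bigr (fun i : 'I_K =>
    if (val i == 0%N) || (10 + k1 <= i)%N then coordZ x i else 0)); last first.
  by move=> i _; rewrite ffunE coordZ_ord; case: ifP; rewrite ?mulr1 ?mulr0.
rewrite -(big_mkord xpredT
  (fun i => if (i == 0%N) || (10 + k1 <= i)%N then coordZ x i else 0)).
rewrite (big_cat_nat _ (n := 1)) //= big_nat1 /=.
rewrite (big_cat_nat _ (n := 10 + k1)) //=; last by rewrite leq_addr.
rewrite [X in _ + (X + _)]big_nat_cond big1 ?add0r; last first.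
  by move=> i /andP[/andP[ge_i1 lt_i] _]; rewrite leqNgt lt_i (gtn_eqF ge_i1).
congr (_ + _); rewrite big_nat_cond [RHS]big_nat_cond.
by apply: eq_bigr => i /andP[/andP[-> _] _]; rewrite orbT.
Qed.

Lemma sel_zerovec : sel (zerovec K) = 0%N.
Proof.
rewrite /sel big1 // => i _.
by rewrite /coordZ /xat; case: insub => [o|] //=; rewrite ffunE.
Qed.

Lemma fourier_fk_freq : fourier (Qfj f 0) freq != 0.
Proof.
rewrite -(mulrI_eq0 _ (mulfI (_ : (10 ^ K.+1)%:R != 0))) ?pnatr_eq0 ?expn_eq0 //.
rewrite (fourier_shift_avg _ _ (pred1 0%N)).
have sum_freq0 : \sum_(i | pred1 0%N (val i)) freq i = 1.
  by rewrite (big_pred1 ord0) ?ffunE.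
have inner x : \sum_(t < 10) Qfj f 0 (shift (pred1 0%N) t x) *
    ezeta (dotZ (shift (pred1 0%N) t x) freq) = if sel x == 0%N then 2%:R else 0.
  rewrite /Qfj; case: ifP => [/eqP sel0 | sel_neq0].
    under eq_bigr do rewrite fk_shift0 sel0 eqxx /= dotZ_shift sum_freq0 mulr1 dotZ_freq //.
    exact: etrans (sum_translate (fun v => (if v == 0 then 1 else -1) * ezeta v) _)
      sum_sign_ezeta.
  under eq_bigr do rewrite fk_shift0 sel_neq0 addr0 dotZ_shift sum_freq0 mulr1 ezetaD mulrA.
  by rewrite -mulr_sumr sum_ezeta mulr0.
under eq_bigr do rewrite inner.
rewrite (bigD1 (zerovec K)) //= sel_zerovec eqxx.
apply: lt0r_neq0; apply: ltr_pwDl; first by rewrite ltr0n.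
by apply: sumr_ge0 => x _; case: ifP; rewrite ?ler0n.
Qed.

Lemma Pg_fk_selector : Pg f k1.
Proof.
exists selector, (zerovec K), 10%N; split; first exact: card_selector.
split=> //; exists (fun i => (val (freq i))%:Z), 0 => x x_sel.
have sel0 : sel x = 0%N.
  rewrite /sel big_nat_cond big1 // => i /andP[i_sel _].
  have lt_iK : (i < K)%N by case/andP: i_sel => _ /leq_trans; apply; rewrite leq_addr.
  by rewrite -[i]/(val (Ordinal lt_iK)) coordZ_ord x_sel ?ffunE // mem_selector.
rewrite -dotZ_freq // val_dotZ add0r.
have -> : \sum_(i | i \notin selector) (val (freq i))%:Z * (val (x i))%:Z =
          \sum_i (val (freq i))%:Z * (val (x i))%:Z.
  rewrite [RHS](bigID (mem selector)) /= [X in _ = X + _]big1 ?add0r // => i.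
  rewrite mem_selector ffunE => /andP[ge_i10 lt_i].
  rewrite ifF ?mul0r //; apply/negbTE.
  by rewrite negb_or -lt0n -ltnNge lt_i andbT (leq_trans _ ge_i10).
rewrite -(modz_nat (dot x freq) 10) modz_mod /dot.
rewrite (big_morph Posz PoszD (erefl (Posz 0))).
by congr (_ %% _)%Z; apply: eq_bigr => i _; rewrite PoszM mulrC.
Qed.

Section AffineObstruction.
Variables (S : {set 'I_K}) (alpha : vec K) (p m : 'I_K).
Hypotheses (p_sel : p \in selector) (pS : p \notin S).
Hypotheses (m_data : m \in data) (mS : m \notin S).

Let z : vec K := [ffun i => if i \in S then alpha i else 0].
Let X (u v : 'I_10) : vec K := shift (pred1 (val p)) u (shift (pred1 (val m)) v z).
Let s0 : 'I_10 := \sum_(10 <= i < 10 + k1) coordZ z i.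
Let T : 'I_10 := \sum_(10 + k1 <= i < K) coordZ z i.

Lemma lt_m_p : (m < p)%N.
Proof.
by move: m_data p_sel; rewrite mem_data mem_selector => lt_m /andP[/(leq_trans lt_m)].
Qed.

Lemma X_S u v i : i \in S -> X u v i = alpha i.
Proof.
move=> iS; have ip : (val i == val p) = false.
  by apply/negbTE; apply: contraNneq pS => /val_inj <-.
have im : (val i == val m) = false.
  by apply/negbTE; apply: contraNneq mS => /val_inj <-.
by rewrite !ffunE /= iS ip im.
Qed.

Lemma sum_X (a : 'I_K -> int) u v :
  \sum_(i | i \notin S) a i * (val (X u v i))%:Z = a p * (val u)%:Z + a m * (val v)%:Z.
Proof.
have mp : (val m == val p) = false by rewrite ltn_eqF // lt_m_p.
have pm : (val p == val m) = false by rewrite gtn_eqF // lt_m_p.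
rewrite (bigD1 p) //= (bigD1 m) /=; last by rewrite mS; exact: negbT mp.
rewrite big1 ?addr0 => [|i /andP[/andP[iS ip] im]].
  by rewrite !ffunE /= (negbTE pS) (negbTE mS) mp pm !eqxx !add0r.
rewrite !ffunE /= (negbTE iS) (negbTE ip : (val i == val p) = false).
by rewrite (negbTE im : (val i == val m) = false) mulr0.
Qed.

Lemma fk_X u v :
  f (X u v) = coordZ z (val (s0 + u)) + (if val (s0 + u) == val m then v else 0) + T.
Proof.
have le_k : (10 + k1 <= K)%N by rewrite leq_addr.
move: p_sel m_data; rewrite mem_selector mem_data => /andP[ge_p10 lt_p] lt_m10.
have sel_m : (10 <= val m < 10 + k1)%N = false by rewrite (leqNgt 10) lt_m10.
have sel_p : (10 <= val p < 10 + k1)%N by rewrite ge_p10.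
have tail_m : (10 + k1 <= val m < K)%N = false by rewrite leqNgt (ltn_addr _ lt_m10).
have tail_p : (10 + k1 <= val p < K)%N = false by rewrite leqNgt lt_p.
have sel_X : sel (X u v) = val (s0 + u).
  by rewrite /sel !sum_coordZ_shift // !big_nat1_eq (ifF _ _ sel_m) sel_p addr0.
have jp : (val (s0 + u) == val p) = false.
  by rewrite ltn_eqF // (leq_trans (ltn_ord _) ge_p10).
rewrite fkE sel_X !sum_coordZ_shift // !big_nat1_eq (ifF _ _ tail_m) (ifF _ _ tail_p).
rewrite !coordZ_shift ?(leq_trans (ltn_ord _) (leq_trans (leq_addr k1 10) le_k)) //.
by rewrite (ifF _ _ jp) !addr0.
Qed.

Lemma not_restr_linear_fk dh : (2 <= dh)%N -> ~ restr_linear f S alpha dh.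
Proof.
move=> dh_ge2 [a [b lin]].
have lin_X u v : ((val (f (X u v)))%:Z =
    b + (a p * (val u)%:Z + a m * (val v)%:Z) %[mod dh%:Z])%Z.
  by rewrite -sum_X; apply: lin; apply: X_S.
move: m_data; rewrite mem_data => lt_m10.
pose u0 : 'I_10 := (val m)%:R - s0.
have sel_u0 : val (s0 + u0) = val m.
  by rewrite /u0 addrC subrK -modZ10E /= modn_small.
have sel_u1 : (val (s0 + (u0 + 1)) == val m) = false.
  rewrite addrA (_ : val (s0 + u0 + 1) = ((val (s0 + u0)%R + 1) %% 10)%N) // sel_u0.
  by apply/negbTE; lia.
have zm : coordZ z m = 0 by rewrite coordZ_ord ffunE (negbTE mS).
have f0 v : f (X u0 v) = v + T by rewrite fk_X sel_u0 zm eqxx add0r.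
have f1 v : f (X (u0 + 1) v) = coordZ z (val (s0 + (u0 + 1))) + T.
  by rewrite fk_X sel_u1 addr0.
have := affine_mixed_diff_mod (lin_X u0 (- T)) (lin_X u0 (1 - T))
  (lin_X (u0 + 1) (- T)) (lin_X (u0 + 1) (1 - T)).
rewrite !f0 !f1 addNr subrK subrK /= => /eqP.
rewrite eqz_mod_dvd subr0 dvdzE /= dvdn1 => /eqP.
lia.
Qed.

End AffineObstruction.

Lemma not_Pg_fk l : (k1 <= 10)%N -> (l < k1)%N -> ~ Pg f l.
Proof.
move=> k1_le10 l_lt_k1 [S [alpha [dh [cardS [/andP[dh_ge2 _] lin]]]]].
have [p p_sel pS] : exists2 p, p \in selector & p \notin S.
  by apply: exists_notin; rewrite cardS card_selector.
have [m m_data mS] : exists2 m, m \in data & m \notin S.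
  by apply: exists_notin; rewrite cardS card_data (leq_trans l_lt_k1).
exact: (not_restr_linear_fk (alpha := alpha) p_sel pS m_data mS dh_ge2 lin).
Qed.

Lemma g_fk : (k1 <= 10)%N -> g f = k1.
Proof.
move=> k1_le10; have le_k1K : (k1 <= K)%N by rewrite -addnA addnCA leq_addr.
apply/eqP; rewrite eqn_leq; apply/andP; split.
  apply: (bigminn_inf _ (i0 := Ordinal (le_k1K : k1 < K.+1)%N)) => //.
  exact: asboolT Pg_fk_selector.
apply: le_bigminn => // l /asboolP Pg_l; rewrite leqNgt; apply/negP => l_lt_k1.
exact: not_Pg_fk k1_le10 l_lt_k1 Pg_l.
Qed.

Lemma r_fk : r f = k2.+1.
Proof.
have le_k2K : (k2.+1 <= K.+1)%N by rewrite ltnS leq_addl.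
apply/eqP; rewrite eqn_leq; apply/andP; split.
  apply: (bigminn_inf _ (i0 := 0)) => //; apply: (bigminn_inf _ (i0 := freq)) H_freq.
  by rewrite freq_neq0 fourier_fk_freq.
apply: le_bigminn => // j _; apply: le_bigminn => // a /andP[a_neq0 fa_neq0].
by rewrite ltnNge; apply: contra fa_neq0 => Ha; rewrite fourier_fk_eq0.
Qed.

End SelectorFunction.

Unset Implicit Arguments.
Local Close Scope ring_scope.

Theorem claim1 (k1 k2 : nat) (hk1 : (0 < k1 <= 10)%N) (hk2 : (0 < k2)%N) :
  g (@fk k1 k2) = k1 /\ r (@fk k1 k2) = k2.+1 /\
  s (@fk k1 k2) = Order.min ((k2.+1)%:R / 2 : rat) ((k1.+1)%:R : rat).
Proof.
have g_eq : g (@fk k1 k2) = k1 by apply: g_fk; case/andP: hk1.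
have r_eq : r (@fk k1 k2) = k2.+1 := r_fk k1 k2.
by rewrite /s g_eq r_eq.
Qed.
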